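(* Let $\gamma$ be a unit speed geodesic ($k_g\equiv 0$) on a smooth oriented surface $M\subset E^3$, with nowhere-vanishing normal curvature, whose position vector always lies in the plane spanned by $\{T,V\}$. Then $\gamma$ is an isophotic curve if and only if $\dfrac{\kappa^2}{(\kappa^2+\tau^2)^{3/2}}$ is a constant function of $s$, where $\kappa,\tau$ are the curvature and torsion of $\gamma$.
   Context: For a unit speed curve $\gamma$ on an oriented surface $M\subset E^3$, the Darboux frame is $T=\gamma'$, $U$ = unit normal of $M$ along $\gamma$, $V = U\times T$, satisfying $T' = k_g V + k_n U$, $V' = -k_g T + \tau_g U$, $U' = -k_n T - \tau_g V$; here $k_g$, $k_n$, $\tau_g$ are the geodesic curvature, normal curvature and geodesic torsion. The curve $\gamma$ is an isophotic curve if there is a fixed unit vector $d$ and a constant angle $\phi$ with $\langle U, d\rangle = \cos\phi$ along $\gamma$. ''Position vector lies in the plane spanned by $\{T,V\}$'' means $\gamma(s) = \mu_1(s)T(s) + \mu_2(s)V(s)$ for differentiable functions $\mu_1,\mu_2$. $\kappa,\tau$ denote the Frenet curvature and torsion of $\gamma$. *)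

From Stdlib Require Import Reals.
From Coquelicot Require Import Coquelicot.
Open Scope R_scope.

Definition vec3 : Type := (R * R * R)%type.

Definition mkv (x y z : R) : vec3 := (x, y, z).
Definition vx (v : vec3) : R := fst (fst v).
Definition vy (v : vec3) : R := snd (fst v).
Definition vz (v : vec3) : R := snd v.

Definition vadd (u v : vec3) : vec3 := mkv (vx u + vx v) (vy u + vy v) (vz u + vz v).
Definition vscale (a : R) (v : vec3) : vec3 := mkv (a * vx v) (a * vy v) (a * vz v).

Definition dot (u v : vec3) : R := vx u * vx v + vy u * vy v + vz u * vz v.
Definition cross (u v : vec3) : vec3 :=
  mkv (vy u * vz v - vz u * vy v)
      (vz u * vx v - vx u * vz v)
      (vx u * vy v - vy u * vx v).
Definition vnorm (v : vec3) : R := sqrt (dot v v).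

(** Frenet curvature and torsion of a curve, computed from its first three
    derivatives d1 = gamma', d2 = gamma'', d3 = gamma''' at a point:
    kappa = |gamma' x gamma''| / |gamma'|^3,
    tau   = <gamma' x gamma'', gamma'''> / |gamma' x gamma''|^2. *)
Definition frenet_curvature (d1 d2 : vec3) : R :=
  vnorm (cross d1 d2) / (vnorm d1) ^ 3.
Definition frenet_torsion (d1 d2 d3 : vec3) : R :=
  dot (cross d1 d2) d3 / (vnorm (cross d1 d2)) ^ 2.

From Stdlib Require Import Reals Lra Psatz.
From Coquelicot Require Import Coquelicot.
Open Scope R_scope.

(* Let gamma be a unit speed geodesic (k_g = 0) with Darboux frame (T, V, U),
   k_n <> 0 and <gamma, U> = 0.  Writing mu_T = <gamma, T>, mu_V = <gamma, V>,
   the Darboux equations give mu_T' = 1, mu_V' = 0 and k_n mu_T + t_g mu_V = 0,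
   so mu_V is a nonzero constant C and t_g = - lam k_n with lam = mu_T / C,
   lam' = 1/C.  For a geodesic kappa^2 = k_n^2 and tau = t_g, hence the ratio
   q = kappa^2 / (kappa^2 + tau^2)^(3/2) satisfies q^2 K = 1 with
   K = k_n^2 (1 + lam^2)^3; thus q is constant iff K is constant.
   - If <U, d> = cos phi = z is constant, differentiating twice gives
     <T, d> = lam <V, d> and <V, d> = C k_n z (1 + lam^2); |d| = 1 then reads
     C^2 z^2 K = 1 - z^2 with z <> 0, so K is constant.
   - If K is constant, the vector z0 (C k_n (1 + lam^2) (lam T + V) + U) with
     z0 = (1 + C^2 K)^(-1/2) has zero derivative; it is the unit direction d
     making the constant angle acos z0 with U. *)

Definition frenet_ratio (kappa tau : R) : R :=
  kappa ^ 2 / Rpower (kappa ^ 2 + tau ^ 2) (3 / 2).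

Definition isophotic (a b : R) (U : R -> vec3) : Prop :=
  exists (d : vec3) (phi : R), vnorm d = 1 /\
    forall s, a < s < b -> dot (U s) d = cos phi.

Lemma is_derive_cst (c s : R) : is_derive (fun _ => c) s 0.
Proof. exact (is_derive_const c s). Qed.

Lemma is_derive_add (f g : R -> R) (s df dg : R) :
  is_derive f s df -> is_derive g s dg -> is_derive (fun r => f r + g r) s (df + dg).
Proof. intros Hf Hg. exact (is_derive_plus f g s df dg Hf Hg). Qed.

Lemma is_derive_mul (f g : R -> R) (s df dg : R) :
  is_derive f s df -> is_derive g s dg ->
  is_derive (fun r => f r * g r) s (df * g s + f s * dg).
Proof. intros Hf Hg. apply (is_derive_mult f g s df dg Hf Hg). intros; apply Rmult_comm. Qed.

(* Coquelicot states derivatives at the types R_AbsRing / R_NormedModule; this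
   exposes such an equation as one between reals, for ring and field. *)
Ltac as_real_eq := cbv beta; match goal with |- ?x = ?y => change (@eq R x y) end.

Lemma is_derive_eq (f : R -> R) (s l l' : R) : is_derive f s l -> l = l' -> is_derive f s l'.
Proof. intros H <-; exact H. Qed.

Section OpenInterval.
Variables a b : R.

Lemma midpoint_inside : a < b -> a < (a + b) / 2 < b.
Proof. lra. Qed.

Lemma open_interval_nbhd s : a < s < b -> locally s (fun r => a < r < b).
Proof. intros Hs. exact (open_and _ _ (open_gt a) (open_lt b) s Hs). Qed.

Lemma zero_derivative_constant (f : R -> R) s0 :
  (forall r, a < r < b -> is_derive f r 0) -> a < s0 < b ->
  forall s, a < s < b -> f s = f s0.
Proof.
  intros Hd Hs0 s Hs.
  assert (Hin : forall x, Rmin s0 s <= x <= Rmax s0 s -> a < x < b).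
  { intros x Hx. split.
    - apply Rlt_le_trans with (Rmin s0 s); [apply Rmin_glb_lt|]; lra.
    - apply Rle_lt_trans with (Rmax s0 s); [|apply Rmax_lub_lt]; lra. }
  destruct (MVT_gen f s0 s (fun _ => 0)) as [c [_ Hc]].
  - intros x Hx. apply Hd, Hin. lra.
  - intros x Hx. apply continuity_pt_filterlim.
    apply (ex_derive_continuous (V := R_NormedModule) f x).
    exists 0. apply Hd, Hin, Hx.
  - lra.
Qed.

Lemma is_derive_ext_interval (f g : R -> R) (s l : R) :
  (forall r, a < r < b -> f r = g r) -> a < s < b -> is_derive f s l -> is_derive g s l.
Proof.
  intros Hfg Hs Hf. apply is_derive_ext_loc with f; [|exact Hf].
  apply (filter_imp (fun r => a < r < b)); [exact Hfg | exact (open_interval_nbhd s Hs)].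
Qed.

Lemma derivative_unique_on (f g : R -> R) (s l l' : R) :
  (forall r, a < r < b -> f r = g r) -> a < s < b ->
  is_derive f s l -> is_derive g s l' -> l = l'.
Proof.
  intros Hfg Hs Hf Hg. apply is_derive_unique in Hg. rewrite <- Hg. symmetry.
  apply is_derive_unique, (is_derive_ext_interval f g s l Hfg Hs Hf).
Qed.

Lemma derivative_of_constant (f : R -> R) (c s l : R) :
  (forall r, a < r < b -> f r = c) -> a < s < b -> is_derive f s l -> l = 0.
Proof.
  intros Hc Hs Hf. symmetry.
  apply (derivative_unique_on (fun _ => c) f s); [|exact Hs|apply is_derive_cst|exact Hf].
  intros r Hr. symmetry. exact (Hc r Hr).
Qed.

End OpenInterval.

Lemma is_derive_fst {X Y : NormedModule R_AbsRing} (F : R -> X * Y) s L :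
  is_derive F s L -> is_derive (fun r => fst (F r)) s (fst L).
Proof.
  intros H. apply (filterdiff_comp F (fun p => fst p) _ (fun p => fst p) H).
  apply filterdiff_linear, is_linear_fst.
Qed.

Lemma is_derive_snd {X Y : NormedModule R_AbsRing} (F : R -> X * Y) s L :
  is_derive F s L -> is_derive (fun r => snd (F r)) s (snd L).
Proof.
  intros H. apply (filterdiff_comp F (fun p => snd p) _ (fun p => snd p) H).
  apply filterdiff_linear, is_linear_snd.
Qed.

Lemma is_derive_coords (F : R -> vec3) (s : R) (L : vec3) :
  is_derive F s L ->
  is_derive (fun r => vx (F r)) s (vx L) /\ is_derive (fun r => vy (F r)) s (vy L) /\
  is_derive (fun r => vz (F r)) s (vz L).
Proof.
  intros HL. apply is_derive_fst in HL as HL1. split; [|split].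
  - exact (is_derive_fst (fun r => fst (F r)) s _ HL1).
  - exact (is_derive_snd (fun r => fst (F r)) s _ HL1).
  - exact (is_derive_snd F s L HL).
Qed.

Lemma is_derive_dot (F G : R -> vec3) (s : R) (F' G' : vec3) :
  is_derive F s F' -> is_derive G s G' ->
  is_derive (fun r => dot (F r) (G r)) s (dot F' (G s) + dot (F s) G').
Proof.
  intros HF HG.
  destruct (is_derive_coords F s F' HF) as (Fx & Fy & Fz).
  destruct (is_derive_coords G s G' HG) as (Gx & Gy & Gz).
  unfold dot. eapply is_derive_eq.
  - apply is_derive_add; [apply is_derive_add|]; apply is_derive_mul; eassumption.
  - as_real_eq; ring.
Qed.

Lemma is_derive_dot_r (F : R -> vec3) (d : vec3) (s : R) (F' : vec3) :
  is_derive F s F' -> is_derive (fun r => dot (F r) d) s (dot F' d).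
Proof.
  intros HF. eapply is_derive_eq.
  - exact (is_derive_dot F (fun _ => d) s F' zero HF (is_derive_const d s)).
  - unfold dot, vx, vy, vz; simpl. unfold zero; simpl. as_real_eq; ring.
Qed.

Ltac vec_ring := unfold dot, cross, vadd, vscale, mkv, vx, vy, vz; simpl; ring.

Lemma dot_comm u v : dot u v = dot v u.
Proof. vec_ring. Qed.

Lemma dot_scale_l k u w : dot (vscale k u) w = k * dot u w.
Proof. vec_ring. Qed.

Lemma dot_scale_r k u w : dot w (vscale k u) = k * dot w u.
Proof. vec_ring. Qed.

Lemma dot_lincomb2_l x u y v w :
  dot (vadd (vscale x u) (vscale y v)) w = x * dot u w + y * dot v w.
Proof. vec_ring. Qed.

Lemma dot_lincomb2_r x u y v w :
  dot w (vadd (vscale x u) (vscale y v)) = x * dot w u + y * dot w v.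
Proof. vec_ring. Qed.

Lemma dot_lincomb3_l x u y v z w e :
  dot (vadd (vscale x u) (vadd (vscale y v) (vscale z w))) e =
  x * dot u e + y * dot v e + z * dot w e.
Proof. vec_ring. Qed.

Lemma dot_lincomb3_r x u y v z w e :
  dot e (vadd (vscale x u) (vadd (vscale y v) (vscale z w))) =
  x * dot e u + y * dot e v + z * dot e w.
Proof. vec_ring. Qed.

Lemma vadd_scale_zero u w : vadd (vscale 0 u) w = w.
Proof. destruct w as [[w1 w2] w3]. unfold vadd, vscale, mkv, vx, vy, vz; simpl. f_equal; [f_equal|]; ring. Qed.

Lemma dot_self_nonneg u : 0 <= dot u u.
Proof. destruct u as [[u1 u2] u3]. unfold dot, vx, vy, vz; simpl. nra. Qed.

Lemma vnorm_one_dot u : vnorm u = 1 -> dot u u = 1.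
Proof. unfold vnorm. intros H. rewrite <- (pow2_sqrt _ (dot_self_nonneg u)), H. ring. Qed.

(* Gram determinant of (U, T, d): the square of the triple product. *)
Lemma triple_product_sq U T d : (dot d (cross U T)) ^ 2 =
  dot U U * (dot T T * dot d d - dot T d * dot d T)
  - dot U T * (dot T U * dot d d - dot T d * dot d U)
  + dot U d * (dot T U * dot d T - dot T T * dot d U).
Proof. destruct U as [[u1 u2] u3], T as [[t1 t2] t3], d as [[d1 d2] d3]. vec_ring. Qed.

Lemma orthonormal_darboux_frame T U :
  dot T T = 1 -> dot U U = 1 -> dot T U = 0 ->
  dot (cross U T) (cross U T) = 1 /\ dot (cross U T) T = 0 /\ dot (cross U T) U = 0 /\
  (forall d, dot d d = (dot T d) ^ 2 + (dot (cross U T) d) ^ 2 + (dot U d) ^ 2).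
Proof.
  intros HT HU HTU.
  assert (Lagrange : dot (cross U T) (cross U T) = dot U U * dot T T - dot U T ^ 2)
    by (destruct U as [[u1 u2] u3], T as [[t1 t2] t3]; vec_ring).
  rewrite (dot_comm U T), HT, HU, HTU in Lagrange.
  split; [lra|]. split; [|split].
  - destruct U as [[u1 u2] u3], T as [[t1 t2] t3]; vec_ring.
  - destruct U as [[u1 u2] u3], T as [[t1 t2] t3]; vec_ring.
  - intros d. pose proof (triple_product_sq U T d) as G.
    rewrite (dot_comm U T), HT, HU, HTU, (dot_comm d (cross U T)), (dot_comm d T),
      (dot_comm d U) in G.
    rewrite G. ring.
Qed.

Lemma cross_T_normal T U k : cross T (vscale k U) = vscale (- k) (cross U T).
Proof.
  destruct U as [[u1 u2] u3], T as [[t1 t2] t3].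
  unfold cross, vscale, mkv, vx, vy, vz; simpl. f_equal; [f_equal|]; ring.
Qed.

Lemma frenet_curvature_geodesic T U k :
  dot T T = 1 -> dot U U = 1 -> dot T U = 0 ->
  frenet_curvature T (vscale k U) ^ 2 = k ^ 2.
Proof.
  intros HT HU HTU. destruct (orthonormal_darboux_frame T U HT HU HTU) as (HV & _).
  unfold frenet_curvature, vnorm. rewrite cross_T_normal, dot_scale_l, dot_scale_r, HV, HT, sqrt_1.
  replace (- k * (- k * 1)) with (k ^ 2) by ring.
  rewrite pow1, Rdiv_1_r, pow2_sqrt; [reflexivity|]. apply pow2_ge_0.
Qed.

Lemma frenet_torsion_geodesic T U k g3 :
  dot T T = 1 -> dot U U = 1 -> dot T U = 0 -> k <> 0 ->
  frenet_torsion T (vscale k U) g3 = - dot (cross U T) g3 / k.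
Proof.
  intros HT HU HTU Hk. destruct (orthonormal_darboux_frame T U HT HU HTU) as (HV & _).
  unfold frenet_torsion, vnorm. rewrite cross_T_normal, !dot_scale_l, dot_scale_r, HV, pow2_sqrt.
  - field. exact Hk.
  - replace (- k * (- k * 1)) with (k ^ 2) by ring. apply pow2_ge_0.
Qed.

Lemma Rpower_three_halves A : 0 < A -> Rpower A (3 / 2) = A * sqrt A.
Proof.
  intros H. replace (3 / 2) with (1 + / 2) by field.
  rewrite Rpower_plus, Rpower_1, Rpower_sqrt; auto.
Qed.

Lemma frenet_ratio_inverse_square k tg lam :
  k <> 0 -> tg = - lam * k ->
  0 < frenet_ratio k tg /\ frenet_ratio k tg ^ 2 * (k ^ 2 * (1 + lam ^ 2) ^ 3) = 1.
Proof.
  intros Hk Htg. unfold frenet_ratio.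
  assert (HA : 0 < k ^ 2 + tg ^ 2) by nra.
  rewrite Rpower_three_halves by exact HA.
  pose proof (sqrt_lt_R0 _ HA) as Hs. pose proof (pow2_sqrt _ (Rlt_le _ _ HA)) as Hss.
  split.
  - apply Rdiv_lt_0_compat; [nra|]. apply Rmult_lt_0_compat; auto.
  - replace ((k ^ 2 / ((k ^ 2 + tg ^ 2) * sqrt (k ^ 2 + tg ^ 2))) ^ 2)
      with (k ^ 4 / ((k ^ 2 + tg ^ 2) ^ 2 * sqrt (k ^ 2 + tg ^ 2) ^ 2)) by (field; lra).
    rewrite Hss. rewrite Htg in HA |- *. field. lra.
Qed.

Lemma inverse_squares_eq q1 q2 K1 K2 :
  0 < q1 -> 0 < q2 -> q1 ^ 2 * K1 = 1 -> q2 ^ 2 * K2 = 1 -> (q1 = q2 <-> K1 = K2).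
Proof.
  intros H1 H2 E1 E2. split.
  - intros <-. apply (Rmult_eq_reg_l (q1 ^ 2)); [lra | apply pow_nonzero; lra].
  - intros <-. assert (E : q1 ^ 2 = q2 ^ 2).
    { apply (Rmult_eq_reg_r K1); [lra | intros Z; rewrite Z in E1; lra]. }
    nra.
Qed.

Section GeodesicInTangentPlane.
Variables (a b : R) (gamma T V U g2 g3 : R -> vec3) (kn tg : R -> R).

Hypothesis a_lt_b : a < b.
Hypothesis unit_speed : forall s, a < s < b -> is_derive gamma s (T s).
Hypothesis T_unit : forall s, a < s < b -> dot (T s) (T s) = 1.
Hypothesis U_unit : forall s, a < s < b -> dot (U s) (U s) = 1.
Hypothesis T_U_orth : forall s, a < s < b -> dot (T s) (U s) = 0.
Hypothesis V_def : forall s, a < s < b -> V s = cross (U s) (T s).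
Hypothesis T_deriv : forall s, a < s < b -> is_derive T s (g2 s).
Hypothesis geodesic : forall s, a < s < b -> g2 s = vscale (kn s) (U s).
Hypothesis V_deriv : forall s, a < s < b -> is_derive V s (vscale (tg s) (U s)).
Hypothesis U_deriv : forall s, a < s < b ->
  is_derive U s (vadd (vscale (- kn s) (T s)) (vscale (- tg s) (V s))).
Hypothesis g2_deriv : forall s, a < s < b -> is_derive g2 s (g3 s).
Hypothesis kn_nonzero : forall s, a < s < b -> kn s <> 0.
Hypothesis position_tangent : forall s, a < s < b -> dot (gamma s) (U s) = 0.

Lemma frame_at s : a < s < b ->
  dot (V s) (V s) = 1 /\ dot (V s) (T s) = 0 /\ dot (V s) (U s) = 0 /\
  (forall d, dot d d = (dot (T s) d) ^ 2 + (dot (V s) d) ^ 2 + (dot (U s) d) ^ 2).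
Proof. intros Hs. rewrite V_def by exact Hs. auto using orthonormal_darboux_frame. Qed.

Lemma T_dot_deriv w s : a < s < b ->
  is_derive (fun r => dot (T r) w) s (kn s * dot (U s) w).
Proof.
  intros Hs. eapply is_derive_eq; [exact (is_derive_dot_r T w s _ (T_deriv s Hs))|].
  rewrite geodesic by exact Hs. apply dot_scale_l.
Qed.

Lemma V_dot_deriv w s : a < s < b ->
  is_derive (fun r => dot (V r) w) s (tg s * dot (U s) w).
Proof.
  intros Hs. eapply is_derive_eq; [exact (is_derive_dot_r V w s _ (V_deriv s Hs))|].
  apply dot_scale_l.
Qed.

Lemma U_dot_deriv w s : a < s < b ->
  is_derive (fun r => dot (U r) w) s (- kn s * dot (T s) w - tg s * dot (V s) w).
Proof.
  intros Hs. eapply is_derive_eq; [exact (is_derive_dot_r U w s _ (U_deriv s Hs))|].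
  rewrite dot_lincomb2_l. ring.
Qed.

Definition mu_T (r : R) : R := dot (gamma r) (T r).
Definition mu_V (r : R) : R := dot (gamma r) (V r).

Lemma mu_T_deriv s : a < s < b -> is_derive mu_T s 1.
Proof.
  intros Hs. eapply is_derive_eq.
  - exact (is_derive_dot gamma T s _ _ (unit_speed s Hs) (T_deriv s Hs)).
  - rewrite geodesic, dot_scale_r, T_unit, position_tangent by exact Hs. ring.
Qed.

Lemma mu_V_deriv s : a < s < b -> is_derive mu_V s 0.
Proof.
  intros Hs. destruct (frame_at s Hs) as (_ & HVT & _).
  eapply is_derive_eq.
  - exact (is_derive_dot gamma V s _ _ (unit_speed s Hs) (V_deriv s Hs)).
  - rewrite dot_scale_r, position_tangent, (dot_comm (T s)), HVT by exact Hs. ring.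
Qed.

(* Differentiating <gamma, U> = 0. *)
Lemma support_relation s : a < s < b -> kn s * mu_T s + tg s * mu_V s = 0.
Proof.
  intros Hs.
  pose proof (derivative_of_constant a b _ 0 s _ position_tangent Hs
    (is_derive_dot gamma U s _ _ (unit_speed s Hs) (U_deriv s Hs))) as E.
  rewrite T_U_orth, dot_lincomb2_r in E by exact Hs. unfold mu_T, mu_V. lra.
Qed.

(* mu_V is a constant mu_V0, which is nonzero since mu_T' = 1. *)
Definition mu_V0 : R := mu_V ((a + b) / 2).

Lemma mu_V_constant s : a < s < b -> mu_V s = mu_V0.
Proof.
  exact (zero_derivative_constant a b mu_V _ mu_V_deriv (midpoint_inside a b a_lt_b) s).
Qed.

Lemma mu_V0_nonzero : mu_V0 <> 0.
Proof.
  intros H0.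
  assert (Hzero : forall s, a < s < b -> mu_T s = 0).
  { intros s Hs. pose proof (support_relation s Hs) as E.
    rewrite mu_V_constant, H0 in E by exact Hs.
    apply (Rmult_eq_reg_l (kn s)); [lra | exact (kn_nonzero s Hs)]. }
  pose proof (midpoint_inside a b a_lt_b) as Hm.
  pose proof (derivative_of_constant a b mu_T 0 _ 1 Hzero Hm (mu_T_deriv _ Hm)). lra.
Qed.

Definition lam (r : R) : R := / mu_V0 * mu_T r.

Lemma lam_deriv s : a < s < b -> is_derive lam s (/ mu_V0).
Proof.
  intros Hs. eapply is_derive_eq; [exact (is_derive_scal mu_T s _ _ (mu_T_deriv s Hs))|]. ring.
Qed.

Lemma geodesic_torsion s : a < s < b -> tg s = - lam s * kn s.
Proof.
  intros Hs. pose proof (support_relation s Hs) as E. rewrite mu_V_constant in E by exact Hs.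
  unfold lam. apply (Rmult_eq_reg_r mu_V0); [|exact mu_V0_nonzero].
  replace (- (/ mu_V0 * mu_T s) * kn s * mu_V0) with (- mu_T s * kn s)
    by (field; exact mu_V0_nonzero).
  lra.
Qed.

(* Differentiating <V, g2> = 0 gives the third-derivative term of the torsion. *)
Lemma V_dot_g3 s : a < s < b -> dot (V s) (g3 s) = - tg s * kn s.
Proof.
  intros Hs.
  assert (Hconst : forall r, a < r < b -> dot (V r) (g2 r) = 0).
  { intros r Hr. destruct (frame_at r Hr) as (_ & _ & HVU & _).
    rewrite geodesic, dot_scale_r, HVU by exact Hr. ring. }
  pose proof (derivative_of_constant a b _ 0 s _ Hconst Hs
    (is_derive_dot V g2 s _ _ (V_deriv s Hs) (g2_deriv s Hs))) as E.
  rewrite geodesic, dot_scale_l, dot_scale_r, U_unit in E by exact Hs. lra.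
Qed.

Lemma frenet_invariants s : a < s < b ->
  frenet_curvature (T s) (g2 s) ^ 2 = kn s ^ 2 /\
  frenet_torsion (T s) (g2 s) (g3 s) = tg s.
Proof.
  intros Hs. rewrite geodesic by exact Hs. split.
  - apply frenet_curvature_geodesic; auto.
  - rewrite frenet_torsion_geodesic, <- V_def, V_dot_g3 by auto.
    field. exact (kn_nonzero s Hs).
Qed.

Definition ratio_inv_sq (r : R) : R := kn r ^ 2 * (1 + lam r ^ 2) ^ 3.

Lemma frenet_ratio_at s : a < s < b ->
  let q := frenet_ratio (frenet_curvature (T s) (g2 s)) (frenet_torsion (T s) (g2 s) (g3 s)) in
  0 < q /\ q ^ 2 * ratio_inv_sq s = 1.
Proof.
  intros Hs. destruct (frenet_invariants s Hs) as [Ek Et].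
  unfold frenet_ratio. rewrite Ek, Et.
  exact (frenet_ratio_inverse_square _ _ _ (kn_nonzero s Hs) (geodesic_torsion s Hs)).
Qed.

Lemma ratio_constant_iff :
  (exists c, forall s, a < s < b ->
     frenet_ratio (frenet_curvature (T s) (g2 s)) (frenet_torsion (T s) (g2 s) (g3 s)) = c)
  <-> (exists k, forall s, a < s < b -> ratio_inv_sq s = k).
Proof.
  pose proof (midpoint_inside a b a_lt_b) as Hm.
  destruct (frenet_ratio_at _ Hm) as [Pm Qm].
  split.
  - intros [c Hc]. exists (ratio_inv_sq ((a + b) / 2)). intros s Hs.
    destruct (frenet_ratio_at s Hs) as [P Q].
    apply (inverse_squares_eq _ _ _ _ P Pm Q Qm). rewrite !Hc; auto.
  - intros [k Hk]. eexists. intros s Hs.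
    destruct (frenet_ratio_at s Hs) as [P Q].
    apply (inverse_squares_eq _ _ _ _ P Pm Q Qm). rewrite !Hk; auto.
Qed.


Section IsophoticDirection.
Variables (d : vec3) (z : R).
Hypothesis d_unit : dot d d = 1.
Hypothesis U_angle : forall s, a < s < b -> dot (U s) d = z.

Lemma isophote_T_component s : a < s < b -> dot (T s) d = lam s * dot (V s) d.
Proof.
  intros Hs. pose proof (derivative_of_constant a b _ z s _ U_angle Hs (U_dot_deriv d s Hs)) as E.
  rewrite geodesic_torsion in E by exact Hs.
  apply (Rmult_eq_reg_l (kn s)); [nra | exact (kn_nonzero s Hs)].
Qed.

Lemma isophote_V_component s : a < s < b ->
  dot (V s) d = mu_V0 * kn s * z * (1 + lam s ^ 2).
Proof.
  intros Hs.
  assert (D : is_derive (fun r => lam r * dot (V r) d) s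
                (/ mu_V0 * dot (V s) d + lam s * (tg s * z))).
  { rewrite <- (U_angle s Hs). apply is_derive_mul; [apply lam_deriv | apply V_dot_deriv]; exact Hs. }
  pose proof (derivative_unique_on a b _ _ s _ _ isophote_T_component Hs (T_dot_deriv d s Hs) D) as E.
  rewrite U_angle, geodesic_torsion in E by exact Hs.
  replace (dot (V s) d) with (mu_V0 * (/ mu_V0 * dot (V s) d)) by (field; exact mu_V0_nonzero).
  replace (/ mu_V0 * dot (V s) d) with (kn s * z * (1 + lam s ^ 2)) by nra.
  ring.
Qed.

(* |d| = 1 in the frame (T, V, U). *)
Lemma isophote_identity s : a < s < b -> mu_V0 ^ 2 * z ^ 2 * ratio_inv_sq s = 1 - z ^ 2.
Proof.
  intros Hs. destruct (frame_at s Hs) as (_ & _ & _ & Parseval).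
  pose proof (Parseval d) as E.
  rewrite d_unit, U_angle, isophote_T_component, isophote_V_component in E by exact Hs.
  assert (Id : (lam s * (mu_V0 * kn s * z * (1 + lam s ^ 2))) ^ 2 +
               (mu_V0 * kn s * z * (1 + lam s ^ 2)) ^ 2 = mu_V0 ^ 2 * z ^ 2 * ratio_inv_sq s)
    by (unfold ratio_inv_sq; ring).
  lra.
Qed.

Lemma isophote_angle_nonzero : z <> 0.
Proof.
  intros Hz. pose proof (isophote_identity _ (midpoint_inside a b a_lt_b)) as E.
  rewrite Hz in E. lra.
Qed.

End IsophoticDirection.

Lemma isophotic_ratio_inv_sq_constant :
  isophotic a b U -> exists k, forall s, a < s < b -> ratio_inv_sq s = k.
Proof.
  intros [d [phi [Hd HU]]].
  pose proof (vnorm_one_dot d Hd) as Hdd.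
  pose proof (isophote_angle_nonzero d (cos phi) Hdd HU) as Hz.
  exists ((1 - cos phi ^ 2) / (mu_V0 ^ 2 * cos phi ^ 2)). intros s Hs.
  rewrite <- (isophote_identity d (cos phi) Hdd HU s Hs).
  field. split; [exact Hz | exact mu_V0_nonzero].
Qed.


(* k_n = <g2, U> is differentiable. *)
Lemma kn_ex_derive s : a < s < b -> ex_derive kn s.
Proof.
  intros Hs. eexists. apply (is_derive_ext_interval a b (fun r => dot (g2 r) (U r))); [|exact Hs|].
  - intros r Hr. rewrite geodesic, dot_scale_l, U_unit by exact Hr. ring.
  - exact (is_derive_dot g2 U s _ _ (g2_deriv s Hs) (U_deriv s Hs)).
Qed.

Section ConstantInvariant.
Variable k : R.
Hypothesis ratio_inv_sq_const : forall s, a < s < b -> ratio_inv_sq s = k.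

(* Differentiating k_n^2 (1 + lam^2)^3 = k. *)
Lemma kn_deriv_relation s kn' : a < s < b -> is_derive kn s kn' ->
  kn' * (1 + lam s ^ 2) = - 3 * kn s * lam s / mu_V0.
Proof.
  intros Hs Hkn.
  assert (D : is_derive ratio_inv_sq s
     (INR 2 * kn' * kn s ^ 1 * (1 + lam s ^ 2) ^ 3 +
      kn s ^ 2 * (INR 3 * (0 + INR 2 * / mu_V0 * lam s ^ 1) * (1 + lam s ^ 2) ^ 2))).
  { apply is_derive_mul; [apply (is_derive_pow kn 2), Hkn|].
    apply (is_derive_pow (fun r => 1 + lam r ^ 2) 3).
    apply is_derive_add; [apply is_derive_cst | apply (is_derive_pow lam 2), lam_deriv, Hs]. }
  pose proof (derivative_of_constant a b _ k s _ ratio_inv_sq_const Hs D) as E.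
  set (W := 1 + lam s ^ 2) in E |- *.
  assert (HW : 0 < W) by (pose proof (pow2_ge_0 (lam s)); unfold W; lra).
  assert (Factor : (2 * kn s * W ^ 2) * (kn' * W - - 3 * kn s * lam s / mu_V0) = 0).
  { rewrite <- E. simpl INR. field. exact mu_V0_nonzero. }
  apply Rmult_integral in Factor as [Z | Z]; [|lra].
  exfalso. revert Z. apply Rmult_integral_contrapositive_currified; [|apply pow_nonzero; lra].
  pose proof (kn_nonzero s Hs). apply Rmult_integral_contrapositive_currified; lra.
Qed.

Lemma k_nonneg : 0 <= k.
Proof.
  pose proof (midpoint_inside a b a_lt_b) as Hm.
  rewrite <- (ratio_inv_sq_const _ Hm). unfold ratio_inv_sq.
  apply Rmult_le_pos; [apply pow2_ge_0 | apply pow_le].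
  pose proof (pow2_ge_0 (lam ((a + b) / 2))). lra.
Qed.

Definition angle_cos : R := / sqrt (1 + mu_V0 ^ 2 * k).
Definition V_coeff (r : R) : R := mu_V0 * kn r * angle_cos * (1 + lam r ^ 2).
Definition T_coeff (r : R) : R := lam r * V_coeff r.
Definition isophote_direction (r : R) : vec3 :=
  vadd (vscale (T_coeff r) (T r)) (vadd (vscale (V_coeff r) (V r)) (vscale angle_cos (U r))).

Lemma angle_cos_sq : angle_cos ^ 2 * (1 + mu_V0 ^ 2 * k) = 1.
Proof.
  assert (HS : 1 <= 1 + mu_V0 ^ 2 * k) by (pose proof k_nonneg; pose proof (pow2_ge_0 mu_V0); nra).
  pose proof (sqrt_lt_R0 (1 + mu_V0 ^ 2 * k) ltac:(lra)) as Hsq.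
  unfold angle_cos.
  replace ((/ sqrt (1 + mu_V0 ^ 2 * k)) ^ 2 * (1 + mu_V0 ^ 2 * k))
    with ((1 + mu_V0 ^ 2 * k) / sqrt (1 + mu_V0 ^ 2 * k) ^ 2) by (field; lra).
  rewrite pow2_sqrt by lra. field. lra.
Qed.

Lemma angle_cos_bounds : 0 < angle_cos <= 1.
Proof.
  pose proof angle_cos_sq as E.
  assert (HS : 0 <= mu_V0 ^ 2 * k) by (apply Rmult_le_pos; [apply pow2_ge_0 | apply k_nonneg]).
  assert (Hpos : 0 < angle_cos) by (apply Rinv_0_lt_compat, sqrt_lt_R0; lra).
  assert (Hsq : angle_cos ^ 2 <= 1) by nra.
  split; [exact Hpos | nra].
Qed.

Lemma V_coeff_deriv s : a < s < b -> is_derive V_coeff s (- angle_cos * kn s * lam s).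
Proof.
  intros Hs. destruct (kn_ex_derive s Hs) as [kn' Hkn']. change R in kn'.
  assert (HW : 1 + lam s ^ 2 <> 0) by (pose proof (pow2_ge_0 (lam s)); lra).
  assert (Hkn'_val : kn' = - 3 * kn s * lam s / mu_V0 / (1 + lam s ^ 2)).
  { rewrite <- (kn_deriv_relation s kn' Hs Hkn'). field. exact HW. }
  unfold V_coeff. eapply is_derive_eq.
  - apply is_derive_mul.
    + apply is_derive_mul; [apply is_derive_mul; [apply is_derive_cst | exact Hkn'] | apply is_derive_cst].
    + apply is_derive_add; [apply is_derive_cst | apply (is_derive_pow lam 2), lam_deriv, Hs].
  - as_real_eq. cbn [INR Init.Nat.pred]. rewrite Hkn'_val. field. split; [exact mu_V0_nonzero | exact HW].
Qed.

Lemma T_coeff_deriv s : a < s < b -> is_derive T_coeff s (angle_cos * kn s).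
Proof.
  intros Hs. unfold T_coeff. eapply is_derive_eq.
  - apply is_derive_mul; [apply lam_deriv | apply V_coeff_deriv]; exact Hs.
  - unfold V_coeff. as_real_eq. field. exact mu_V0_nonzero.
Qed.

Lemma direction_dot_deriv e s : a < s < b ->
  is_derive (fun r => dot (isophote_direction r) e) s 0.
Proof.
  intros Hs.
  apply is_derive_ext with
    (fun r => T_coeff r * dot (T r) e + V_coeff r * dot (V r) e + angle_cos * dot (U r) e).
  { intros r. unfold isophote_direction. symmetry. apply dot_lincomb3_l. }
  eapply is_derive_eq.
  - apply is_derive_add; [apply is_derive_add|]; apply is_derive_mul.
    + exact (T_coeff_deriv s Hs).
    + exact (T_dot_deriv e s Hs).
    + exact (V_coeff_deriv s Hs).
    + exact (V_dot_deriv e s Hs).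
    + apply is_derive_cst.
    + exact (U_dot_deriv e s Hs).
  - rewrite geodesic_torsion by exact Hs. unfold T_coeff. as_real_eq. ring.
Qed.

Lemma direction_constant e r : a < r < b ->
  dot (isophote_direction r) e = dot (isophote_direction ((a + b) / 2)) e.
Proof.
  exact (zero_derivative_constant a b _ _ (direction_dot_deriv e) (midpoint_inside a b a_lt_b) r).
Qed.

Lemma direction_components r : a < r < b ->
  dot (T r) (isophote_direction r) = T_coeff r /\
  dot (V r) (isophote_direction r) = V_coeff r /\
  dot (U r) (isophote_direction r) = angle_cos.
Proof.
  intros Hr. destruct (frame_at r Hr) as (HVV & HVT & HVU & _).
  unfold isophote_direction. rewrite !dot_lincomb3_r.
  rewrite (dot_comm (T r) (V r)), (dot_comm (U r) (T r)), (dot_comm (U r) (V r)),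
    T_unit, U_unit, T_U_orth, HVV, HVT, HVU by exact Hr.
  repeat split; ring.
Qed.

Lemma direction_unit : vnorm (isophote_direction ((a + b) / 2)) = 1.
Proof.
  pose proof (midpoint_inside a b a_lt_b) as Hm.
  destruct (frame_at _ Hm) as (_ & _ & _ & Parseval).
  destruct (direction_components _ Hm) as (CT & CV & CU).
  unfold vnorm. rewrite Parseval, CT, CV, CU.
  replace (T_coeff ((a + b) / 2) ^ 2 + V_coeff ((a + b) / 2) ^ 2 + angle_cos ^ 2)
    with (angle_cos ^ 2 * (1 + mu_V0 ^ 2 * ratio_inv_sq ((a + b) / 2)))
    by (unfold T_coeff, V_coeff, ratio_inv_sq; ring).
  rewrite ratio_inv_sq_const, angle_cos_sq by exact Hm. exact sqrt_1.
Qed.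

Lemma constant_invariant_isophotic : isophotic a b U.
Proof.
  exists (isophote_direction ((a + b) / 2)), (acos angle_cos).
  split; [exact direction_unit|]. intros s Hs.
  rewrite cos_acos by (pose proof angle_cos_bounds; lra).
  rewrite dot_comm, <- (direction_constant (U s) s Hs), dot_comm.
  apply direction_components, Hs.
Qed.

End ConstantInvariant.

Lemma isophotic_iff_frenet_ratio_constant :
  isophotic a b U <->
  exists c, forall s, a < s < b ->
    frenet_ratio (frenet_curvature (T s) (g2 s)) (frenet_torsion (T s) (g2 s) (g3 s)) = c.
Proof.
  rewrite ratio_constant_iff. split.
  - exact isophotic_ratio_inv_sq_constant.
  - intros [k Hk]. exact (constant_invariant_isophotic k Hk).
Qed.

End GeodesicInTangentPlane.

Theorem corollary4p1
  (a b : R) (gamma T V U g2 g3 : R -> vec3) (kg kn tg : R -> R) :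
  a < b ->
  (forall s, a < s < b ->
     is_derive gamma s (T s) /\
     dot (T s) (T s) = 1 /\ dot (U s) (U s) = 1 /\ dot (T s) (U s) = 0 /\
     V s = cross (U s) (T s) /\
     is_derive T s (g2 s) /\
     g2 s = vadd (vscale (kg s) (V s)) (vscale (kn s) (U s)) /\
     is_derive V s (vadd (vscale (- kg s) (T s)) (vscale (tg s) (U s))) /\
     is_derive U s (vadd (vscale (- kn s) (T s)) (vscale (- tg s) (V s))) /\
     is_derive g2 s (g3 s)) ->
  (forall s, a < s < b -> kg s = 0) ->
  (forall s, a < s < b -> kn s <> 0) ->
  (exists mu1 mu2 : R -> R,
     (forall s, a < s < b -> ex_derive mu1 s /\ ex_derive mu2 s) /\
     (forall s, a < s < b ->
        gamma s = vadd (vscale (mu1 s) (T s)) (vscale (mu2 s) (V s)))) ->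
  ((exists (d : vec3) (phi : R), vnorm d = 1 /\
      forall s, a < s < b -> dot (U s) d = cos phi)
   <->
   (exists c : R, forall s, a < s < b ->
      let kappa := frenet_curvature (T s) (g2 s) in
      let tau := frenet_torsion (T s) (g2 s) (g3 s) in
      kappa ^ 2 / Rpower (kappa ^ 2 + tau ^ 2) (3 / 2) = c)).
Proof.
  intros Hab Hf Hkg Hkn [mu1 [mu2 [_ Hmu]]].
  (* With k_g = 0 the Darboux equations take the geodesic form of the section. *)
  apply (isophotic_iff_frenet_ratio_constant a b gamma T V U g2 g3 kn tg Hab);
    intros s Hs; specialize (Hkg s Hs);
    destruct (Hf s Hs) as (Hgam & HT & HU & HTU & HV & HdT & Hg2 & HdV & HdU & Hdg2);
    try assumption.
  - rewrite Hg2, Hkg. apply vadd_scale_zero.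
  - rewrite Hkg, Ropp_0, vadd_scale_zero in HdV. exact HdV.
  - exact (Hkn s Hs).
  -
    destruct (orthonormal_darboux_frame _ _ HT HU HTU) as (_ & _ & HVU & _).
    rewrite Hmu, dot_lincomb2_l, HTU, HV, HVU by exact Hs. ring.
Qed.
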